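(* Let $G$ be a structured quadratic-bilinear system given by $(\mathcal C,\mathcal K,\mathcal B,\mathcal N,\mathcal H)$ with structured generalized transfer functions, and $\widehat G$ the reduced-order system obtained by projection with $V,W\in\mathbb C^{n\times r}$ of full column rank. Let $\sigma_1,\sigma_2\in\mathbb C$ be such that $\mathcal C,\mathcal K,\mathcal B,\mathcal N$ can be evaluated at $\sigma_1,\sigma_2$, $\mathcal H$ at $(\sigma_1,\sigma_1)$, and $\mathcal K(\sigma_1),\mathcal K(\sigma_2)$ are invertible; assume $W^{\mathsf H}\mathcal K(\sigma_i)V$ is invertible for $i=1,2$. If $$\operatorname{span}(V)\supseteq\operatorname{span}\big(\mathcal K(\sigma_1)^{-1}\mathcal B(\sigma_1)\big),\qquad\operatorname{span}(W)\supseteq\operatorname{span}\big(\mathcal K(\sigma_2)^{-\mathsf H}\mathcal C(\sigma_2)^{\mathsf H}\big),$$ then $$G_1^{(B)}(\sigma_1)=\widehat G_1^{(B)}(\sigma_1),\quad G_1^{(B)}(\sigma_2)=\widehat G_1^{(B)}(\sigma_2),\quad G_2^{(N,(B))}(\sigma_1,\sigma_2)=\widehat G_2^{(N,(B))}(\sigma_1,\sigma_2),$$ $$G_3^{(H,(B),(B))}(\sigma_1,\sigma_1,\sigma_2)=\widehat G_3^{(H,(B),(B))}(\sigma_1,\sigma_1,\sigma_2).$$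
   Context: A structured quadratic-bilinear system (in frequency domain) with $n$ states, $m$ inputs and $p$ outputs is given by matrix-valued functions $\mathcal C:\mathbb C\to\mathbb C^{p\times n}$, $\mathcal K:\mathbb C\to\mathbb C^{n\times n}$, $\mathcal B:\mathbb C\to\mathbb C^{n\times m}$, $\mathcal N:\mathbb C\to\mathbb C^{n\times nm}$ with $\mathcal N(s)=[\mathcal N_1(s)\ \cdots\ \mathcal N_m(s)]$, $\mathcal N_j(s)\in\mathbb C^{n\times n}$, and $\mathcal H:\mathbb C\times\mathbb C\to\mathbb C^{n\times n^2}$. Its structured generalized transfer functions are $G_1^{(B)}(s_1)=\mathcal C(s_1)\mathcal K(s_1)^{-1}\mathcal B(s_1)$, $G_2^{(N,(B))}(s_1,s_2)=\mathcal C(s_2)\mathcal K(s_2)^{-1}\mathcal N(s_1)\big(I_m\otimes\mathcal K(s_1)^{-1}\mathcal B(s_1)\big)$, $G_3^{(H,(B),(B))}(s_1,s_2,s_3)=\mathcal C(s_3)\mathcal K(s_3)^{-1}\mathcal H(s_2,s_1)\big(\mathcal K(s_2)^{-1}\mathcal B(s_2)\otimes\mathcal K(s_1)^{-1}\mathcal B(s_1)\big)$, wherever the inverses exist; $\otimes$ is the Kronecker product. The reduced-order system obtained by projection with $V,W\in\mathbb C^{n\times r}$ is given by $\widehat{\mathcal C}(s)=\mathcal C(s)V$, $\widehat{\mathcal K}(s)=W^{\mathsf H}\mathcal K(s)V$, $\widehat{\mathcal B}(s)=W^{\mathsf H}\mathcal B(s)$, $\widehat{\mathcal N}(s)=W^{\mathsf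 H}\mathcal N(s)(I_m\otimes V)$, $\widehat{\mathcal H}(s_1,s_2)=W^{\mathsf H}\mathcal H(s_1,s_2)(V\otimes V)$, where $W^{\mathsf H}$ is the conjugate transpose and $\mathcal K(s)^{-\mathsf H}=(\mathcal K(s)^{-1})^{\mathsf H}$; its generalized transfer functions $\widehat G$ are defined by the same formulas with hatted functions. *)

From HB Require Import structures.
From mathcomp Require Import all_boot all_order all_algebra.
From mathcomp Require Import reals.
From mathcomp.real_closed Require Import complex mxtens.

Set Implicit Arguments.
Unset Strict Implicit.
Unset Printing Implicit Defensive.

Import GRing.Theory.
Local Open Scope ring_scope.

Definition ctrmx (R : realType) (k l : nat) (A : 'M[R[i]]_(k, l)) : 'M[R[i]]_(l, k) :=
  map_mx (@conjc R) A^T.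

(* column span inclusion: span(A) ⊆ span(B)  (MathComp's <=%MS is on row spaces) *)
Definition colspan_sub (R : realType) (k a b : nat)
  (A : 'M[R[i]]_(k, a)) (B : 'M[R[i]]_(k, b)) : bool :=
  (A^T <= B^T)%MS.

Section QB.
Variables (R : realType) (n m p : nat).
Local Notation C := R[i].

Definition G1 (Cf : C -> 'M[C]_(p, n)) (Kf : C -> 'M[C]_n) (Bf : C -> 'M[C]_(n, m))
  (s1 : C) : 'M[C]_(p, m) :=
  Cf s1 *m invmx (Kf s1) *m Bf s1.

Definition G2 (Cf : C -> 'M[C]_(p, n)) (Kf : C -> 'M[C]_n) (Bf : C -> 'M[C]_(n, m))
  (Nf : C -> 'M[C]_(n, m * n)) (s1 s2 : C) : 'M[C]_(p, m * m) :=
  Cf s2 *m invmx (Kf s2) *m Nf s1 *m (1%:M *t (invmx (Kf s1) *m Bf s1)).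

Definition G3 (Cf : C -> 'M[C]_(p, n)) (Kf : C -> 'M[C]_n) (Bf : C -> 'M[C]_(n, m))
  (Hf : C -> C -> 'M[C]_(n, n * n)) (s1 s2 s3 : C) : 'M[C]_(p, m * m) :=
  Cf s3 *m invmx (Kf s3) *m Hf s2 s1
     *m ((invmx (Kf s2) *m Bf s2) *t (invmx (Kf s1) *m Bf s1)).
End QB.

Section Reduced.
Variables (R : realType) (n m p r : nat).
Local Notation C := R[i].
Variables (V W : 'M[C]_(n, r)).

Definition redC (Cf : C -> 'M[C]_(p, n)) : C -> 'M[C]_(p, r) :=
  fun s => Cf s *m V.
Definition redK (Kf : C -> 'M[C]_n) : C -> 'M[C]_r :=
  fun s => ctrmx W *m Kf s *m V.
Definition redB (Bf : C -> 'M[C]_(n, m)) : C -> 'M[C]_(r, m) :=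
  fun s => ctrmx W *m Bf s.
Definition redN (Nf : C -> 'M[C]_(n, m * n)) : C -> 'M[C]_(r, m * r) :=
  fun s => ctrmx W *m Nf s *m (1%:M *t V).
Definition redH (Hf : C -> C -> 'M[C]_(n, n * n)) : C -> C -> 'M[C]_(r, r * r) :=
  fun s1 s2 => ctrmx W *m Hf s1 s2 *m (V *t V).
End Reduced.

From HB Require Import structures.
From mathcomp Require Import all_boot all_order all_algebra.
From mathcomp Require Import reals.
From mathcomp.real_closed Require Import complex mxtens.

Set Implicit Arguments.
Unset Strict Implicit.
Unset Printing Implicit Defensive.

Import GRing.Theory.
Local Open Scope ring_scope.

(* The span hypotheses say that the primitive solutions factor through the
   projection bases: K(s1)^-1 B(s1) = V Y and C(s2) K(s2)^-1 = Z W^H.  Two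
   one-sided facts then hold for every Petrov-Galerkin projection with an
   invertible reduced matrix K_r(s) = W^H K(s) V:
   - input side:  K_r(s1)^-1 B_r(s1) = Y, i.e. the reduced input solution is
     the coordinate vector of the full one in the basis V;
   - output side: C_r(s2) K_r(s2)^-1 = Z, the dual statement for W.
   Each generalized transfer function is a product "output factor * middle *
   input factors"; substituting these identities, and pushing V (resp. V ⊗ V)
   through the Kronecker factors with the mixed-product rule, makes the full and
   reduced expressions coincide. *)

Lemma ctrmx_mul (R : realType) (a b c : nat)
    (A : 'M[R[i]]_(a, b)) (B : 'M[R[i]]_(b, c)) :
  ctrmx (A *m B) = ctrmx B *m ctrmx A.
Proof. by rewrite /ctrmx trmx_mul map_mxM. Qed.

Lemma ctrmxK (R : realType) (a b : nat) (A : 'M[R[i]]_(a, b)) :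
  ctrmx (ctrmx A) = A.
Proof. by apply/matrixP=> i j; rewrite /ctrmx !mxE conjcK. Qed.

Lemma colspan_subP (F : fieldType) (k a b : nat)
    (A : 'M[F]_(k, a)) (V : 'M[F]_(k, b)) :
  (A^T <= V^T)%MS -> exists Y : 'M[F]_(b, a), A = V *m Y.
Proof.
by case/submxP=> Z AZ; exists Z^T; rewrite -[A]trmxK AZ trmx_mul trmxK.
Qed.

Lemma colspan_sub_ctrmx (R : realType) (k a b : nat)
    (A : 'M[R[i]]_(a, k)) (W : 'M[R[i]]_(k, b)) :
  colspan_sub (ctrmx A) W -> exists Z : 'M[R[i]]_(a, b), A = Z *m ctrmx W.
Proof.
case/colspan_subP=> Y AY; exists (ctrmx Y).
by rewrite -[A]ctrmxK AY ctrmx_mul.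
Qed.

Lemma reduced_input_solution (F : fieldType) (n m r : nat)
    (K : 'M[F]_n) (B : 'M[F]_(n, m)) (V : 'M[F]_(n, r)) (Wt : 'M[F]_(r, n))
    (Y : 'M[F]_(r, m)) :
  Wt *m K *m V \in unitmx -> B = K *m V *m Y ->
  invmx (Wt *m K *m V) *m (Wt *m B) = Y.
Proof.
move=> uKr ->; have -> : Wt *m (K *m V *m Y) = Wt *m K *m V *m Y.
  by rewrite !mulmxA.
by rewrite mulKmx.
Qed.

Lemma reduced_output_solution (F : fieldType) (n p r : nat)
    (K : 'M[F]_n) (C : 'M[F]_(p, n)) (V : 'M[F]_(n, r)) (Wt : 'M[F]_(r, n))
    (Z : 'M[F]_(p, r)) :
  Wt *m K *m V \in unitmx -> C = Z *m Wt *m K ->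
  C *m V *m invmx (Wt *m K *m V) = Z.
Proof.
move=> uKr ->; have -> : Z *m Wt *m K *m V = Z *m (Wt *m K *m V).
  by rewrite !mulmxA.
by rewrite mulmxK.
Qed.

Lemma tens1mx_mul (F : fieldType) (m n r k : nat)
    (V : 'M[F]_(n, r)) (Y : 'M[F]_(r, k)) :
  (1%:M : 'M[F]_m) *t V *m (1%:M *t Y) = 1%:M *t (V *m Y).
Proof. by rewrite tensmx_mul mul1mx. Qed.

Section ProjectionInterpolation.
Variables (R : realType) (n m p r : nat).
Local Notation C := R[i].
Variables (Cf : C -> 'M[C]_(p, n)) (Kf : C -> 'M[C]_n)
  (Bf : C -> 'M[C]_(n, m)) (V W : 'M[C]_(n, r)).

Local Notation Kr := (redK V W Kf).
Local Notation Cr := (redC V Cf).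
Local Notation Br := (redB W Bf).

Section InputPoint.
Variables (s1 : C) (Y : 'M[C]_(r, m)).
Hypotheses (uK1 : Kf s1 \in unitmx) (uKr1 : Kr s1 \in unitmx)
  (inputV : invmx (Kf s1) *m Bf s1 = V *m Y).

Lemma input_coordinates : invmx (Kr s1) *m Br s1 = Y.
Proof.
apply: reduced_input_solution uKr1 _.
by rewrite -mulmxA -inputV mulmxA mulmxV // mul1mx.
Qed.

Lemma G1_input_match : G1 Cf Kf Bf s1 = G1 Cr Kr Br s1.
Proof. by rewrite /G1 -!mulmxA input_coordinates inputV. Qed.
End InputPoint.

Section OutputPoint.
Variables (s2 : C) (Z : 'M[C]_(p, r)).
Hypotheses (uK2 : Kf s2 \in unitmx) (uKr2 : Kr s2 \in unitmx)
  (outputW : Cf s2 *m invmx (Kf s2) = Z *m ctrmx W).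

Lemma output_coordinates : Cr s2 *m invmx (Kr s2) = Z.
Proof.
apply: reduced_output_solution uKr2 _.
by rewrite -outputW -mulmxA mulVmx // mulmx1.
Qed.

Lemma G1_output_match : G1 Cf Kf Bf s2 = G1 Cr Kr Br s2.
Proof. by rewrite /G1 outputW output_coordinates !mulmxA. Qed.
End OutputPoint.

Section MixedPoints.
Variables (s1 s2 : C) (Y : 'M[C]_(r, m)) (Z : 'M[C]_(p, r)).
Hypotheses (uK1 : Kf s1 \in unitmx) (uKr1 : Kr s1 \in unitmx)
  (uK2 : Kf s2 \in unitmx) (uKr2 : Kr s2 \in unitmx)
  (inputV : invmx (Kf s1) *m Bf s1 = V *m Y)
  (outputW : Cf s2 *m invmx (Kf s2) = Z *m ctrmx W).

Lemma G2_match (Nf : C -> 'M[C]_(n, m * n)) :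
  G2 Cf Kf Bf Nf s1 s2 = G2 Cr Kr Br (redN V W Nf) s1 s2.
Proof.
rewrite /G2 outputW (output_coordinates uK2 uKr2 outputW).
rewrite (input_coordinates uK1 uKr1 inputV) inputV.
by rewrite /redN -!mulmxA tens1mx_mul.
Qed.

Lemma G3_match (Hf : C -> C -> 'M[C]_(n, n * n)) :
  G3 Cf Kf Bf Hf s1 s1 s2 = G3 Cr Kr Br (redH V W Hf) s1 s1 s2.
Proof.
rewrite /G3 outputW (output_coordinates uK2 uKr2 outputW).
rewrite (input_coordinates uK1 uKr1 inputV) inputV.
by rewrite /redH -!mulmxA tensmx_mul.
Qed.
End MixedPoints.

End ProjectionInterpolation.

Unset Implicit Arguments.

Theorem corollary4p5 (R : realType) (n m p r : nat)
  (Cf : R[i] -> 'M[R[i]]_(p, n)) (Kf : R[i] -> 'M[R[i]]_n)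
  (Bf : R[i] -> 'M[R[i]]_(n, m)) (Nf : R[i] -> 'M[R[i]]_(n, m * n))
  (Hf : R[i] -> R[i] -> 'M[R[i]]_(n, n * n))
  (V W : 'M[R[i]]_(n, r)) (s1 s2 : R[i]) :
  \rank V = r -> \rank W = r ->
  Kf s1 \in unitmx -> Kf s2 \in unitmx ->
  ctrmx W *m Kf s1 *m V \in unitmx ->
  ctrmx W *m Kf s2 *m V \in unitmx ->
  colspan_sub (invmx (Kf s1) *m Bf s1) V ->
  colspan_sub (ctrmx (invmx (Kf s2)) *m ctrmx (Cf s2)) W ->
  [/\ G1 Cf Kf Bf s1 = G1 (redC V Cf) (redK V W Kf) (redB W Bf) s1,
      G1 Cf Kf Bf s2 = G1 (redC V Cf) (redK V W Kf) (redB W Bf) s2,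
      G2 Cf Kf Bf Nf s1 s2
        = G2 (redC V Cf) (redK V W Kf) (redB W Bf) (redN V W Nf) s1 s2
    & G3 Cf Kf Bf Hf s1 s1 s2
        = G3 (redC V Cf) (redK V W Kf) (redB W Bf) (redH V W Hf) s1 s1 s2].
Proof.
move=> _ _ uK1 uK2 uKr1 uKr2 spanV spanW.
have [Y inputV] := colspan_subP spanV.
have [Z outputW] : exists Z, Cf s2 *m invmx (Kf s2) = Z *m ctrmx W.
  by apply: colspan_sub_ctrmx; rewrite ctrmx_mul.
have G1E1 := G1_input_match Cf uK1 uKr1 inputV.
have G1E2 := G1_output_match Bf uK2 uKr2 outputW.
have G2E := G2_match uK1 uKr1 uK2 uKr2 inputV outputW Nf.
have G3E := G3_match uK1 uKr1 uK2 uKr2 inputV outputW Hf.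
exact: And4 G1E1 G1E2 G2E G3E.
Qed.
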